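(* Let $(X,Y)$ be a random vector with joint cumulative distribution function $H$, where $X$ and $Y$ take values in the non-negative integers, with zero-inflated marginal cdfs $F(s)=(1-\pi_F)+\pi_F\bar F(s)$ and $G(t)=(1-\pi_G)+\pi_G\bar G(t)$ for $s,t\ge 0$ (and $F(s)=G(t)=0$ for negative arguments), where $\bar F,\bar G$ are discrete distribution functions and $\pi_F,\pi_G\in[0,1]$. Let $(\tilde X_1,\tilde Y_1)$ and $(\tilde X_2,\tilde Y_2)$ be two independent copies of $(X,Y)$, and define Kendall's $\tau$ of $(X,Y)$ as $$\tau_A=\mathbb{P}[(\tilde X_1-\tilde X_2)(\tilde Y_1-\tilde Y_2)>0]-\mathbb{P}[(\tilde X_1-\tilde X_2)(\tilde Y_1-\tilde Y_2)<0].$$ Let $p_{00}=\mathbb{P}[X=0,Y=0]$, $p_{01}=\mathbb{P}[X=0,Y>0]$, $p_{10}=\mathbb{P}[X>0,Y=0]$, $p_{11}=\mathbb{P}[X>0,Y>0]$. Let $X_{10}$ and $X_{11}$ be independent random variables, with $X_{10}$ distributed as $X$ conditionally on $\{X>0,Y=0\}$ and $X_{11}$ distributed as $X$ conditionally on $\{X>0,Y>0\}$; let $Y_{01}$ and $Y_{11}$ be independent random variables, with $Y_{01}$ distributed as $Y$ conditionally on $\{X=0,Y>0\}$ and $Y_{11}$ distributed as $Y$ conditionally on $\{X>0,Y>0\}$. Set $p_1^{\ast}=\mathbb{P}[X_{10}>X_{11}]$, $p_2^{\ast}=\mathbb{P}[Y_{01}>Y_{11}]$, $p_1^{\dagger}=\mathbb{P}[X_{10}=X_{11}]$,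 $p_2^{\dagger}=\mathbb{P}[Y_{01}=Y_{11}]$, and let $\tau_{11}$ be Kendall's $\tau$ (probability of concordance minus probability of discordance of two independent copies) of the conditional distribution of $(X,Y)$ given $\{X>0,Y>0\}$. Then $$\tau_A=p_{11}^2\tau_{11}+2(p_{00}p_{11}-p_{01}p_{10})+2p_{11}\big[p_{10}(1-2p_1^{\ast}-p_1^{\dagger})+p_{01}(1-2p_2^{\ast}-p_2^{\dagger})\big].$$
   Context: Conditional quantities (such as $p_1^\ast,p_1^\dagger,\tau_{11}$) are only defined when the conditioning event has positive probability; when a conditioning event has probability zero, the term in which the corresponding quantity appears is multiplied by a zero probability and is interpreted as $0$. *)

(* discrete laws on N x N given by probability mass
   functions; probabilities of events are (countable) sums via esum. *)
From HB Require Import structures.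
From mathcomp Require Import all_boot all_order all_algebra.
From mathcomp Require Import all_classical all_reals all_analysis.
Set Implicit Arguments. Unset Strict Implicit. Unset Printing Implicit Defensive.
Import Order.TTheory GRing.Theory Num.Theory.
Local Open Scope classical_set_scope.
Local Open Scope ring_scope.

Section Defs.
Variable R : realType.

Definition is_pmf (T : choiceType) (p : T -> R) : Prop :=
  (forall i, 0 <= p i) /\ (\esum_(i in [set: T]) (p i)%:E = 1%E).

Definition Pr (T : choiceType) (p : T -> R) (A : set T) : R :=
  fine (\esum_(i in A) (p i)%:E).

(* probability of an event B for a pair of independent variables with
   mass functions p and q (product law) *)
Definition Pr2 (T U : choiceType) (p : T -> R) (q : U -> R) (B : set (T * U)) : R :=
  fine (\esum_(z in B) (p z.1 * q z.2)%:E).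

(* conditional mass function of p given A; identically 0 if P[A] = 0 *)
Definition cond (T : choiceType) (p : T -> R) (A : set T) : T -> R :=
  fun i => if `[< A i >] then p i / Pr p A else 0.

Definition kendall_tau (p : nat * nat -> R) : R :=
  Pr2 p p [set z | 0 < ((z.1.1)%:R - (z.2.1)%:R) * ((z.1.2)%:R - (z.2.2)%:R) :> R]
  - Pr2 p p [set z | ((z.1.1)%:R - (z.2.1)%:R) * ((z.1.2)%:R - (z.2.2)%:R) < 0 :> R].

Definition cdfX (p : nat * nat -> R) (s : nat) : R :=
  Pr p [set z | (z.1 <= s)%N].
Definition cdfY (p : nat * nat -> R) (t : nat) : R :=
  Pr p [set z | (z.2 <= t)%N].

Definition cdf1 (q : nat -> R) (s : nat) : R := Pr q [set k | (k <= s)%N].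

Definition zero_inflated (F : nat -> R) : Prop :=
  exists (pi : R) (q : nat -> R), 0 <= pi <= 1 /\ is_pmf q /\
    forall s, F s = (1 - pi) + pi * cdf1 q s.

Definition A00 : set (nat * nat) := [set z | z.1 = 0%N /\ z.2 = 0%N].
Definition A01 : set (nat * nat) := [set z | z.1 = 0%N /\ (0 < z.2)%N].
Definition A10 : set (nat * nat) := [set z | (0 < z.1)%N /\ z.2 = 0%N].
Definition A11 : set (nat * nat) := [set z | (0 < z.1)%N /\ (0 < z.2)%N].

End Defs.

From HB Require Import structures.
From mathcomp Require Import all_boot all_order all_algebra.
From mathcomp Require Import all_classical all_reals all_analysis.
From mathcomp Require Import ring lra zify.
Import Order.TTheory GRing.Theory Num.Theory.
Local Open Scope classical_set_scope.
Local Open Scope ring_scope.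
Set Implicit Arguments. Unset Strict Implicit. Unset Printing Implicit Defensive.

(* Split each of two independent copies (X1, Y1), (X2, Y2) of (X, Y) according to
   the quadrant {X = 0 or X > 0} x {Y = 0 or Y > 0} in which it lies.  Exchanging
   the copies shows that tau is twice P[X1 < X2, Y1 < Y2] minus twice
   P[X1 < X2, Y1 > Y2].  A zero coordinate is always the smaller one, so for most
   pairs of quadrants these events hold or fail outright, which produces
   p00 p11 and p01 p10; the pairs (A01, A11), (A10, A11) and (A11, A11) leave
   comparisons that conditioning turns into p2*, p2†, p1*, p1† and tau11. *)

Section esum_scale.
Variables (R : realType) (T : choiceType).

Lemma esumZl (I : set T) (a : T -> \bar R) (r : R) :
  0 <= r -> (forall i, (0 <= a i)%E) ->
  \esum_(i in I) (r%:E * a i)%E = (r%:E * \esum_(i in I) a i)%E.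
Proof.
move=> r0 a0; rewrite /esum -ereal_supZl//; last first.
  by apply/set0P; exists 0%E; exists set0; [exact: fsets_set0| rewrite fsbig_set0].
rewrite image_comp; congr ereal_sup; apply: eq_imagel => A _ /=.
by rewrite ge0_mule_fsumr.
Qed.

Lemma fine_EFinM (k : R) (x : \bar R) : fine (k%:E * x)%E = k * fine x.
Proof.
by case: x => [r| |] //=; rewrite mulr_infty;
  case: sgrP; rewrite ?mul1e ?mul0e ?mulN1e /= ?mulr0.
Qed.
End esum_scale.

Section finite_mass.
Variables (R : realType) (T : choiceType) (f : T -> R).
Hypothesis f_ge0 : forall i, 0 <= f i.

Lemma Pr_ge0 A : 0 <= Pr f A.
Proof. by apply: fine_ge0; apply: esum_ge0 => i _; rewrite lee_fin. Qed.

Lemma PrZ (c : R) A : 0 <= c -> Pr (fun i => c * f i) A = c * Pr f A.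
Proof. by move=> c0; rewrite /Pr -fine_EFinM -esumZl. Qed.

Lemma Pr_mkcond A B :
  Pr (fun i => if `[< B i >] then f i else 0) A = Pr f (A `&` B).
Proof.
rewrite /Pr esum_mkcondr; congr fine; apply: eq_esum => i _.
by case: asboolP => Bi; [rewrite mem_set | rewrite memNset].
Qed.

Hypothesis f_fin : (\esum_(i in [set: T]) (f i)%:E < +oo)%E.

Lemma esum_PrE A : \esum_(i in A) (f i)%:E = (Pr f A)%:E.
Proof.
rewrite /Pr fineK // ge0_fin_numE; last by apply: esum_ge0 => i _; rewrite lee_fin.
apply: le_lt_trans f_fin; rewrite [leLHS]esum_mkcond; apply: le_esum => i _.
by case: ifP; rewrite ?lee_fin.
Qed.

Lemma le_Pr A B : A `<=` B -> Pr f A <= Pr f B.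
Proof.
move=> AB; rewrite -lee_fin -!esum_PrE esum_mkcond [leRHS]esum_mkcond.
apply: le_esum => i _; case: ifPn => [/set_mem/AB/mem_set -> //|_].
by case: ifP; rewrite ?lee_fin.
Qed.

Lemma PrU A B : A `&` B = set0 -> Pr f (A `|` B) = Pr f A + Pr f B.
Proof.
move=> AB0; apply: EFin_inj; rewrite EFinD -!esum_PrE.
rewrite (esumID A) => [|i _]; last by rewrite lee_fin.
by rewrite setUK -setDE setUKD // AB0.
Qed.

End finite_mass.

Lemma pmf_esum_lty (R : realType) (T : choiceType) (p : T -> R) :
  is_pmf p -> (\esum_(i in [set: T]) (p i)%:E < +oo)%E.
Proof. by case=> _ ->; rewrite ltry. Qed.

Lemma Pr2E (R : realType) (T U : choiceType) (p : T -> R) (q : U -> R) S :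
  Pr2 p q S = Pr (fun z => p z.1 * q z.2) S.
Proof. by []. Qed.

Section product.
Variables (R : realType) (T U : choiceType) (p : T -> R) (q : U -> R).
Hypotheses (p_pmf : is_pmf p) (q_pmf : is_pmf q).

Let p_ge0 := proj1 p_pmf.
Let q_ge0 := proj1 q_pmf.

Lemma esum_setX A B :
  \esum_(z in A `*` B) (p z.1 * q z.2)%:E = (Pr p A * Pr q B)%:E.
Proof.
have esum_row i : \esum_(j in B) (p i * q j)%:E = ((Pr q B)%:E * (p i)%:E)%E.
  by rewrite -esum_PrE ?pmf_esum_lty // muleC -esumZl.
transitivity (\esum_(i in A) \esum_(j in B) (p i * q j)%:E)%E.
  by rewrite esum_esum // => i j _ _; rewrite lee_fin mulr_ge0.
under eq_esum do rewrite esum_row.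
by rewrite esumZl ?Pr_ge0 // esum_PrE ?pmf_esum_lty // -EFinM mulrC.
Qed.

Lemma Pr2_setX A B : Pr2 p q (A `*` B) = Pr p A * Pr q B.
Proof. by rewrite /Pr2 esum_setX. Qed.

Lemma is_pmf_prod : is_pmf (fun z : T * U => p z.1 * q z.2).
Proof.
split=> [z|]; first exact: mulr_ge0.
by rewrite -setXTT esum_setX /Pr (proj2 p_pmf) (proj2 q_pmf) mulr1.
Qed.

Let pq_ge0 := proj1 is_pmf_prod.
Let pq_fin := pmf_esum_lty is_pmf_prod.

Lemma le_Pr2 S S' : S `<=` S' -> Pr2 p q S <= Pr2 p q S'.
Proof. exact: le_Pr. Qed.

Lemma Pr2U S S' :
  S `&` S' = set0 -> Pr2 p q (S `|` S') = Pr2 p q S + Pr2 p q S'.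
Proof. exact: PrU. Qed.

Lemma Pr2_swap S : Pr2 q p [set z | S (z.2, z.1)] = Pr2 p q S.
Proof.
rewrite /Pr2 (reindex_esum [set z | S (z.2, z.1)] S (fun z => (z.2, z.1))).
  by congr fine; apply: eq_esum => z _; rewrite mulrC.
split=> [z //|[a b] [c d] _ _ [-> ->] //|[a b] Sab].
by exists (b, a).
Qed.

Lemma mul_Pr2_cond A B S :
  Pr p A * Pr q B * Pr2 (cond p A) (cond q B) S = Pr2 p q (S `&` A `*` B).
Proof.
have [PAB0|PABn0] := eqVneq (Pr p A * Pr q B) 0.
  rewrite PAB0 mul0r; apply/esym/le_anti; rewrite Pr_ge0 // andbT.
  by rewrite -PAB0 -Pr2_setX le_Pr2 // => z [].
have condE : (fun z : T * U => cond p A z.1 * cond q B z.2) =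
    (fun z => (Pr p A * Pr q B)^-1 *
              if `[< (A `*` B) z >] then p z.1 * q z.2 else 0).
  apply/funext => -[i j]; rewrite /cond /=.
  case: asboolP => [Ai|nAi]; last by rewrite mul0r asboolF ?mulr0 // => -[/nAi].
  case: asboolP => [Bj|nBj]; last by rewrite mulr0 asboolF ?mulr0 // => -[_ /nBj].
  by rewrite asboolT // mulrACA invfM mulrC.
have restr_ge0 z : 0 <= if `[< (A `*` B) z >] then p z.1 * q z.2 else 0.
  by case: asboolP => _ //; exact: pq_ge0.
rewrite Pr2E condE (PrZ restr_ge0) ?invr_ge0 ?mulr_ge0 ?Pr_ge0 //.
by rewrite mulrA mulfV // mul1r Pr_mkcond.
Qed.

End product.

Lemma Pr2_setU_swap (R : realType) (T : choiceType) (p : T -> R) S A :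
  is_pmf p -> S `&` [set z | S (z.2, z.1)] = set0 ->
  Pr2 p p ((S `|` [set z | S (z.2, z.1)]) `&` A `*` A) = 2 * Pr2 p p (S `&` A `*` A).
Proof.
move=> p_pmf S_asym; rewrite setIUl Pr2U //; last first.
  by apply: subsetI_eq0 S_asym; apply: subIsetl.
rewrite mulr_natl mulr2n -[X in _ = _ + X](Pr2_swap p p (S `&` A `*` A)).
congr (_ + Pr2 _ _ _).
by apply/seteqP; split => z /= [? []].
Qed.

Definition lt_by {T : Type} (g : T -> nat) : set (T * T) := [set z | (g z.1 < g z.2)%N].
Definition eq_by {T : Type} (g : T -> nat) : set (T * T) := [set z | g z.1 = g z.2].
Definition gt_by {T : Type} (g : T -> nat) : set (T * T) := [set z | (g z.2 < g z.1)%N].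

Ltac set_lia :=
  apply/seteqP; split => z;
  rewrite /setT /setI /setU /setX /set0 /lt_by /eq_by /gt_by /A00 /A01 /A10 /A11 /=;
  lia.

Lemma lt_eq_gt_by (T : Type) (g : T -> nat) : lt_by g `|` eq_by g `|` gt_by g = setT.
Proof. set_lia. Qed.

Section comparison.
Variables (R : realType) (T : choiceType) (p q : T -> R) (g : T -> nat).
Hypotheses (p_pmf : is_pmf p) (q_pmf : is_pmf q).

Lemma Pr2_lt_eq_gt S :
  Pr2 p q S = Pr2 p q (lt_by g `&` S) + Pr2 p q (eq_by g `&` S) + Pr2 p q (gt_by g `&` S).
Proof.
by rewrite -[in LHS](setTI S) -(lt_eq_gt_by g) !setIUl !Pr2U //; set_lia.
Qed.

Lemma Pr2_cond_cmp A B :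
  let P := Pr2 (cond p A) (cond q B) in
  Pr p A * Pr q B * (1 - 2 * P (gt_by g) - P (eq_by g)) =
  Pr2 p q (lt_by g `&` A `*` B) - Pr2 p q (gt_by g `&` A `*` B).
Proof.
move=> P; rewrite !mulrBr mulr1 mulrCA !mul_Pr2_cond // -Pr2_setX //.
rewrite (Pr2_lt_eq_gt (A `*` B)); ring.
Qed.

End comparison.

Lemma natB_mulr_gt0 (R : realDomainType) (a b c d : nat) :
  (0 < (a%:R - b%:R) * (c%:R - d%:R) :> R) =
  (a < b)%N && (c < d)%N || (b < a)%N && (d < c)%N.
Proof.
case: (ltngtP a b) => [ab|ba|->]; last by rewrite subrr mul0r ltxx.
- by rewrite nmulr_rgt0 ?subr_lt0 ?ltr_nat // orbF.
- by rewrite pmulr_rgt0 ?subr_gt0 ?ltr_nat.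
Qed.

Lemma concordantE (R : realDomainType) :
  [set z : (nat * nat) * (nat * nat) |
    0 < ((z.1.1)%:R - (z.2.1)%:R) * ((z.1.2)%:R - (z.2.2)%:R) :> R] =
  lt_by fst `&` lt_by snd `|` [set z | (lt_by fst `&` lt_by snd) (z.2, z.1)].
Proof. apply/seteqP; split => z; rewrite /= natB_mulr_gt0 /setI /setU /lt_by /=; lia. Qed.

Lemma discordantE (R : realDomainType) :
  [set z : (nat * nat) * (nat * nat) |
    ((z.1.1)%:R - (z.2.1)%:R) * ((z.1.2)%:R - (z.2.2)%:R) < 0 :> R] =
  lt_by fst `&` gt_by snd `|` [set z | (lt_by fst `&` gt_by snd) (z.2, z.1)].
Proof.
apply/seteqP; split => z;
  rewrite /= -oppr_gt0 -mulrN opprB natB_mulr_gt0 /setI /setU /lt_by /gt_by /=; lia.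
Qed.

Section kendall.
Variables (R : realType) (p : nat * nat -> R).
Hypothesis p_pmf : is_pmf p.

Lemma kendall_tau_cond A :
  Pr p A ^+ 2 * kendall_tau (cond p A) =
  2 * (Pr2 p p (lt_by fst `&` lt_by snd `&` A `*` A) -
       Pr2 p p (lt_by fst `&` gt_by snd `&` A `*` A)).
Proof.
rewrite /kendall_tau concordantE discordantE expr2 !mulrBr !mul_Pr2_cond //.
by rewrite !Pr2_setU_swap //; set_lia.
Qed.

Lemma cond_setT : cond p setT = p.
Proof. by apply/funext => z; rewrite /cond asboolT // /Pr (proj2 p_pmf) divr1. Qed.

Lemma kendall_tauE :
  kendall_tau p =
  2 * (Pr2 p p (lt_by fst `&` lt_by snd) - Pr2 p p (lt_by fst `&` gt_by snd)).
Proof.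
have := kendall_tau_cond setT.
by rewrite cond_setT /Pr (proj2 p_pmf) expr1n mul1r setXTT !setIT.
Qed.

Lemma Pr2_lt_lt_quadrants :
  Pr2 p p (lt_by fst `&` lt_by snd) =
  Pr p A00 * Pr p A11 + Pr2 p p (lt_by snd `&` A01 `*` A11) +
  Pr2 p p (lt_by fst `&` A10 `*` A11) + Pr2 p p (lt_by fst `&` lt_by snd `&` A11 `*` A11).
Proof.
have quadrants : lt_by fst `&` lt_by snd =
    A00 `*` A11 `|` lt_by snd `&` A01 `*` A11 `|` lt_by fst `&` A10 `*` A11
    `|` lt_by fst `&` lt_by snd `&` A11 `*` A11 by set_lia.
by rewrite {1}quadrants !Pr2U ?Pr2_setX //; set_lia.
Qed.

Lemma Pr2_lt_gt_quadrants :
  Pr2 p p (lt_by fst `&` gt_by snd) =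
  Pr p A01 * Pr p A10 + Pr2 p p (gt_by snd `&` A01 `*` A11) +
  Pr2 p p (gt_by fst `&` A10 `*` A11) + Pr2 p p (lt_by fst `&` gt_by snd `&` A11 `*` A11).
Proof.
have quadrants : lt_by fst `&` gt_by snd =
    A01 `*` A10 `|` gt_by snd `&` A01 `*` A11
    `|` [set z | (gt_by fst `&` A10 `*` A11) (z.2, z.1)]
    `|` lt_by fst `&` gt_by snd `&` A11 `*` A11 by set_lia.
by rewrite {1}quadrants !Pr2U ?Pr2_setX ?Pr2_swap //; set_lia.
Qed.

End kendall.

Unset Implicit Arguments.

Theorem theorem1 (R : realType) (p : nat * nat -> R) :
  is_pmf p ->
  zero_inflated (cdfX p) ->
  zero_inflated (cdfY p) ->
  let p00 := Pr p A00 in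
  let p01 := Pr p A01 in
  let p10 := Pr p A10 in
  let p11 := Pr p A11 in
  let c10 := cond p A10 in
  let c01 := cond p A01 in
  let c11 := cond p A11 in
  let p1s := Pr2 c10 c11 [set z | (z.2.1 < z.1.1)%N] in
  let p2s := Pr2 c01 c11 [set z | (z.2.2 < z.1.2)%N] in
  let p1d := Pr2 c10 c11 [set z | z.1.1 = z.2.1] in
  let p2d := Pr2 c01 c11 [set z | z.1.2 = z.2.2] in
  let tau11 := kendall_tau c11 in
  kendall_tau p =
    p11 ^+ 2 * tau11 + 2 * (p00 * p11 - p01 * p10)
    + 2 * p11 * (p10 * (1 - 2 * p1s - p1d) + p01 * (1 - 2 * p2s - p2d)).
Proof.
move=> p_pmf _ _ p00 p01 p10 p11 c10 c01 c11 p1s p2s p1d p2d tau11.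
have tau11E : p11 ^+ 2 * tau11 = _ := kendall_tau_cond p_pmf A11.
have cmpX : p10 * p11 * (1 - 2 * p1s - p1d) = _ := Pr2_cond_cmp fst p_pmf p_pmf A10 A11.
have cmpY : p01 * p11 * (1 - 2 * p2s - p2d) = _ := Pr2_cond_cmp snd p_pmf p_pmf A01 A11.
rewrite kendall_tauE // Pr2_lt_lt_quadrants // Pr2_lt_gt_quadrants //.
rewrite -/p00 -/p01 -/p10 -/p11.
lra.
Qed.
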